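(* Let $R$ satisfy the assumptions in the context and fix $j\in\llbracket 1,m_x\rrbracket$. Suppose $N^*_{j-\frac12,k-\frac12}\ge 0$ for all $k\in\llbracket1,m_y\rrbracket$, and set $U^*_{j-\frac12,k-\frac12}=\varepsilon\ln N^*_{j-\frac12,k-\frac12}$ (with the convention $\exp(U^*/\varepsilon)=0$ when $N^*=0$). Then: (i) the equation $$\rho=\Delta y\sum_{k=1}^{m_y}\exp\Big(\frac{U^*_{j-\frac12,k-\frac12}+\Delta t\,R(y_{k-\frac12},\rho)}{\varepsilon}\Big)$$ has a unique solution $\rho=\rho^{h+1}_{j-\frac12}\in[0,\infty)$; consequently the scheme $U^{h+1}_{j-\frac12,k-\frac12}=U^*_{j-\frac12,k-\frac12}+\Delta t\,R(y_{k-\frac12},\rho^{h+1}_{j-\frac12})$, $N^{h+1}_{j-\frac12,k-\frac12}=\exp(U^{h+1}_{j-\frac12,k-\frac12}/\varepsilon)$, admits a unique solution, and it satisfies $N^{h+1}_{j-\frac12,k-\frac12}\ge 0$ for all $k$ and $\rho^{h+1}_{j-\frac12}=\Delta y\sum_{k}N^{h+1}_{j-\frac12,k-\frac12}$; (ii) if moreover $0\le \rho^*_{j-\frac12}:=\Delta y\sum_{k=1}^{m_y}N^*_{j-\frac12,k-\frac12}\le\rho_M$, then $0\le\rho^{h+1}_{j-\frac12}\le\rho_M$.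
   Context: Fix $Y>0$, integers $m_x,m_y\ge1$, $\Delta y=Y/m_y$, $y_{k-\frac12}=(k-\frac12)\Delta y$, $\Delta t>0$, $\varepsilon>0$, and $\rho_M\in(0,\infty)$. The function $R:[0,Y]\times[0,\infty)\to\mathbb{R}$ is smooth and bounded and satisfies $R(Y,0)=0$, $R(0,\rho_M)=0$, $\partial_\rho R(y,\rho)<0$ for all $(y,\rho)$, and $\partial_y R(y,\rho)<0$ for $y\in(0,Y]$. The scheme above is the implicit time discretisation of the reaction step $\partial_t u=R(y,\rho)$, $\rho=\int_0^Y e^{u/\varepsilon}dy$, with $n=e^{u/\varepsilon}$. *)

From Stdlib Require Import Reals.
From Coquelicot Require Import Coquelicot.
Open Scope R_scope.

Fixpoint Ck2 (n : nat) (f : R -> R -> R) : Prop :=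
  (forall x y : R, continuous (fun p : R * R => f (fst p) (snd p)) (x, y)) /\
  match n with
  | O => True
  | S m =>
      (forall x y : R, ex_derive (fun t => f t y) x /\ ex_derive (fun t => f x t) y) /\
      Ck2 m (fun x y => Derive (fun t => f t y) x) /\
      Ck2 m (fun x y => Derive (fun t => f x t) y)
  end.

Definition smooth2 (f : R -> R -> R) : Prop := forall n, Ck2 n f.

(* exp((U + a)/eps) where U = eps * ln N, with the convention that it is 0
   when N = 0 (U = -infinity). *)
Definition expU (eps N a : R) : R :=
  if Req_EM_T N 0 then 0 else exp ((eps * ln N + a) / eps).

From Stdlib Require Import Reals Lra Lia Arith.
From Coquelicot Require Import Coquelicot.
Open Scope R_scope.

(* Since exp((eps ln N + a)/eps) = N exp(a/eps) (also for N = 0), the scheme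
   reduces to the fixed-point equation rho = g(rho) for the map
     g(rho) = dy * sum_k N*_k exp(e_k(rho)),   e_k(rho) = dt R(y_k, rho) / eps.
   Because R is smooth, bounded, and decreasing in rho, g is continuous,
   nonnegative, bounded on [0, oo) and nonincreasing.  Two abstract facts
   about such maps then give (i): a continuous self-map of [0, oo) with
   bounded range has a fixed point (intermediate value theorem), and a
   nonincreasing map meets the identity at most once.  For (ii), R is also
   decreasing in y and R(0, rhoM) = 0, so e_k(rhoM) <= 0 and hence
   g(rhoM) <= dy * sum_k N*_k <= rhoM; a fixed point of a nonincreasing map
   lies below every c with g(c) <= c. *)

Lemma sum_n_m_le_loc (a b : nat -> R) (n m : nat) :
  (forall k, (n <= k <= m)%nat -> a k <= b k) -> sum_n_m a n m <= sum_n_m b n m.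
Proof.
  intros Hab.
  rewrite (sum_n_m_ext_loc a (fun k => Rmin (a k) (b k))).
  - apply sum_n_m_le. intros k. apply Rmin_r.
  - intros k Hk. symmetry. apply Rmin_left, Hab, Hk.
Qed.

Lemma sum_n_m_nonneg (a : nat -> R) (n m : nat) :
  (forall k, (n <= k <= m)%nat -> 0 <= a k) -> 0 <= sum_n_m a n m.
Proof.
  intros Ha.
  change 0 with (@zero R_AbelianMonoid).
  rewrite <- (sum_n_m_const_zero n m).
  apply sum_n_m_le_loc, Ha.
Qed.

Lemma sum_n_m_continuity (g : nat -> R -> R) (n m : nat) :
  (forall k, continuity (g k)) -> continuity (fun r => sum_n_m (fun k => g k r) n m).
Proof.
  intros Hg x. induction m as [|m IH].
  - destruct n as [|n].
    + apply continuity_pt_ext with (g 0%nat); [intros r; now rewrite sum_n_n | apply Hg].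
    + apply continuity_pt_ext with (fun _ => 0); [|apply continuity_pt_const; now intros ? ?].
      intros r. now rewrite sum_n_m_zero by lia.
  - destruct (le_lt_dec n (S m)) as [Hn|Hn].
    + apply continuity_pt_ext with (fun r => sum_n_m (fun k => g k r) n m + g (S m) r).
      * intros r. now rewrite sum_n_Sm.
      * apply continuity_pt_plus; [exact IH | apply Hg].
    + apply continuity_pt_ext with (fun _ => 0); [|apply continuity_pt_const; now intros ? ?].
      intros r. now rewrite sum_n_m_zero.
Qed.

Lemma nonincreasing_of_Derive_nonpos (f : R -> R) (a b : R) :
  (forall x, ex_derive f x) -> (forall x, a < x < b -> Derive f x <= 0) ->
  a <= b -> f b <= f a.
Proof.
  intros Hder Hneg Hab.
  destruct (Req_dec a b) as [<-|Hne]; [lra|].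
  destruct (MVT_cor2 f (Derive f) a b) as [c [Hmvt Hc]]; [lra| |].
  - intros x _. apply is_derive_Reals, Derive_correct, Hder.
  - specialize (Hneg c Hc). nra.
Qed.

Lemma exp_le_compat (x y : R) : x <= y -> exp x <= exp y.
Proof.
  intros [Hlt | ->]; [left; apply exp_increasing, Hlt | apply Rle_refl].
Qed.

Lemma expU_eq (eps N a : R) : 0 < eps -> 0 <= N -> expU eps N a = N * exp (a / eps).
Proof.
  intros Heps HN. unfold expU.
  destruct Req_EM_T as [-> | HN0]; [ring|].
  replace ((eps * ln N + a) / eps) with (ln N + a / eps) by (field; lra).
  rewrite exp_plus, exp_ln by lra. ring.
Qed.

Definition nonincreasing_on_nonneg (g : R -> R) : Prop :=
  forall a b, 0 <= a <= b -> g b <= g a.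

(* A continuous map sending [0, oo) into [0, B] has a fixed point in [0, B]:
   apply the intermediate value theorem to r - g r on [0, B]. *)
Lemma bounded_map_fixed_point (g : R -> R) (B : R) :
  continuity g -> (forall r, 0 <= r -> 0 <= g r <= B) ->
  exists rho, 0 <= rho <= B /\ rho = g rho.
Proof.
  intros Hg Hrange.
  assert (HB : 0 <= B) by (destruct (Hrange 0) as [H0 HB]; lra).
  destruct (IVT_cor (fun r => r - g r) 0 B) as [rho [Hrho Hzero]]; [| exact HB | |].
  - intros x. apply continuity_pt_minus; [apply continuity_pt_id | apply Hg].
  - destruct (Hrange 0) as [H0 _]; [lra|]. destruct (Hrange B) as [_ HgB]; [lra|].
    apply Rmult_le_0_r; lra.
  - exists rho. split; [exact Hrho | lra].
Qed.

Lemma nonincreasing_fixed_point_unique (g : R -> R) (rho rho' : R) :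
  nonincreasing_on_nonneg g -> 0 <= rho -> 0 <= rho' ->
  rho = g rho -> rho' = g rho' -> rho' = rho.
Proof.
  intros Hg Hrho Hrho' Hfix Hfix'.
  destruct (Rtotal_order rho' rho) as [Hlt|[Heq|Hgt]]; [| exact Heq |].
  - assert (g rho <= g rho') by (apply Hg; lra). lra.
  - assert (g rho' <= g rho) by (apply Hg; lra). lra.
Qed.

Lemma nonincreasing_fixed_point_le (g : R -> R) (c rho : R) :
  nonincreasing_on_nonneg g -> 0 <= c -> g c <= c -> rho = g rho -> rho <= c.
Proof.
  intros Hg Hc Hgc Hfix.
  destruct (Rle_or_lt rho c) as [Hle|Hlt]; [exact Hle|].
  assert (g rho <= g c) by (apply Hg; lra). lra.
Qed.

Definition weighted_exp_map (dy : R) (w : nat -> R) (e : nat -> R -> R) (m : nat)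
  (rho : R) : R :=
  dy * sum_n_m (fun k => w k * exp (e k rho)) 1 m.

Section WeightedExpMap.

Variables (dy : R) (w : nat -> R) (e : nat -> R -> R) (m : nat).
Hypothesis dy_pos : 0 < dy.
Hypothesis w_nonneg : forall k, (1 <= k <= m)%nat -> 0 <= w k.

Lemma weighted_exp_map_continuity :
  (forall k rho, ex_derive (e k) rho) -> continuity (weighted_exp_map dy w e m).
Proof.
  intros He x. unfold weighted_exp_map.
  apply continuity_pt_mult; [apply continuity_pt_const; now intros ? ? |].
  revert x. apply sum_n_m_continuity. intros k x.
  apply continuity_pt_filterlim.
  apply (ex_derive_continuous (K := R_AbsRing) (V := R_NormedModule)
           (fun r => w k * exp (e k r))).
  auto_derive. apply He.
Qed.

(* Each term grows with its exponent, so the map inherits monotonicity. *)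
Lemma weighted_exp_map_nonincreasing :
  (forall k, (1 <= k <= m)%nat -> nonincreasing_on_nonneg (e k)) ->
  nonincreasing_on_nonneg (weighted_exp_map dy w e m).
Proof.
  intros He a b Hab. unfold weighted_exp_map.
  apply Rmult_le_compat_l; [lra|].
  apply sum_n_m_le_loc. intros k Hk.
  apply Rmult_le_compat_l; [apply w_nonneg, Hk|].
  apply exp_le_compat, He; assumption.
Qed.

Lemma weighted_exp_map_range (c rho : R) :
  (forall k, (1 <= k <= m)%nat -> e k rho <= c) ->
  0 <= weighted_exp_map dy w e m rho <= dy * (exp c * sum_n_m w 1 m).
Proof.
  intros He. unfold weighted_exp_map. split.
  - apply Rmult_le_pos; [lra|]. apply sum_n_m_nonneg. intros k Hk.
    apply Rmult_le_pos; [apply w_nonneg, Hk | left; apply exp_pos].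
  - apply Rmult_le_compat_l; [lra|].
    rewrite <- (sum_n_m_mult_l (K := R_Ring)).
    apply sum_n_m_le_loc. intros k Hk. change (mult (exp c) (w k)) with (exp c * w k).
    rewrite (Rmult_comm (exp c)). apply Rmult_le_compat_l; [apply w_nonneg, Hk|].
    apply exp_le_compat, He, Hk.
Qed.

Lemma weighted_exp_map_unique_fixed_point (M : R) :
  (forall k rho, ex_derive (e k) rho) ->
  (forall k, (1 <= k <= m)%nat -> nonincreasing_on_nonneg (e k)) ->
  (forall k rho, (1 <= k <= m)%nat -> 0 <= rho -> e k rho <= M) ->
  exists rho, 0 <= rho /\ rho = weighted_exp_map dy w e m rho /\
    (forall rho', 0 <= rho' -> rho' = weighted_exp_map dy w e m rho' -> rho' = rho).
Proof.
  intros Hder Hmono Hbound.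
  destruct (bounded_map_fixed_point (weighted_exp_map dy w e m)
              (dy * (exp M * sum_n_m w 1 m))) as [rho [Hrho Hfix]].
  - apply weighted_exp_map_continuity, Hder.
  - intros rho Hrho. apply weighted_exp_map_range. intros k Hk. apply Hbound; assumption.
  - exists rho. split; [lra | split; [exact Hfix |]].
    intros rho' Hrho' Hfix'.
    apply (nonincreasing_fixed_point_unique (weighted_exp_map dy w e m));
      [apply weighted_exp_map_nonincreasing, Hmono | lra | assumption ..].
Qed.

Lemma weighted_exp_map_fixed_point_le (c rho : R) :
  (forall k, (1 <= k <= m)%nat -> nonincreasing_on_nonneg (e k)) ->
  0 <= c -> (forall k, (1 <= k <= m)%nat -> e k c <= 0) -> dy * sum_n_m w 1 m <= c ->
  rho = weighted_exp_map dy w e m rho -> rho <= c.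
Proof.
  intros Hmono Hc Hec Hsum Hfix.
  apply (nonincreasing_fixed_point_le (weighted_exp_map dy w e m));
    [apply weighted_exp_map_nonincreasing, Hmono | exact Hc | | exact Hfix].
  destruct (weighted_exp_map_range 0 c Hec) as [_ Hle].
  rewrite exp_0, Rmult_1_l in Hle. lra.
Qed.

End WeightedExpMap.

Lemma smooth2_ex_derive (f : R -> R -> R) :
  smooth2 f -> forall x y, ex_derive (fun t => f t y) x /\ ex_derive (fun t => f x t) y.
Proof. intros Hf. exact (proj1 (proj2 (Hf 1%nat))). Qed.

Lemma smooth2_nonincreasing_snd (f : R -> R -> R) (Y : R) :
  smooth2 f ->
  (forall y rho, 0 <= y <= Y -> 0 <= rho -> Derive (fun r => f y r) rho < 0) ->
  forall y, 0 <= y <= Y -> nonincreasing_on_nonneg (f y).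
Proof.
  intros Hf Hneg y Hy a b Hab.
  apply (nonincreasing_of_Derive_nonpos (fun r => f y r)); [| | lra].
  - intros x. apply smooth2_ex_derive, Hf.
  - intros x Hx. left. apply Hneg; lra.
Qed.

Lemma smooth2_le_at_zero_fst (f : R -> R -> R) (Y : R) :
  smooth2 f ->
  (forall y rho, 0 < y <= Y -> 0 <= rho -> Derive (fun t => f t rho) y < 0) ->
  forall y rho, 0 <= y <= Y -> 0 <= rho -> f y rho <= f 0 rho.
Proof.
  intros Hf Hneg y rho Hy Hrho.
  apply (nonincreasing_of_Derive_nonpos (fun t => f t rho)); [| | lra].
  - intros x. apply smooth2_ex_derive, Hf.
  - intros x Hx. left. apply Hneg; lra.
Qed.

Lemma scaled_le (dt eps x x' : R) :
  0 < dt -> 0 < eps -> x <= x' -> dt * x / eps <= dt * x' / eps.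
Proof.
  intros Hdt Heps Hx. unfold Rdiv.
  apply Rmult_le_compat_r; [left; apply Rinv_0_lt_compat, Heps|].
  apply Rmult_le_compat_l; lra.
Qed.

Lemma midpoint_in_domain (Y : R) (m k : nat) :
  0 < Y -> (1 <= k <= m)%nat -> 0 < (INR k - 1 / 2) * (Y / INR m) <= Y.
Proof.
  intros HY Hk.
  assert (Hm : 0 < INR m) by (apply lt_0_INR; lia).
  assert (1 <= INR k <= INR m) by (split; [apply (le_INR 1) | apply le_INR]; lia).
  assert (INR m * (Y / INR m) = Y) by (field; lra).
  assert (0 < Y / INR m) by (apply Rdiv_lt_0_compat; lra).
  split; nra.
Qed.

Section ReactionExponent.

Variables (Rf : R -> R -> R) (Y dt eps : R).
Hypothesis Rf_smooth : smooth2 Rf.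
Hypothesis dt_pos : 0 < dt.
Hypothesis eps_pos : 0 < eps.

Lemma reaction_exponent_derivable (y rho : R) : ex_derive (fun r => dt * Rf y r / eps) rho.
Proof. auto_derive. apply smooth2_ex_derive, Rf_smooth. Qed.

Lemma reaction_exponent_nonincreasing (y : R) :
  (forall y rho, 0 <= y <= Y -> 0 <= rho -> Derive (fun r => Rf y r) rho < 0) ->
  0 <= y <= Y -> nonincreasing_on_nonneg (fun r => dt * Rf y r / eps).
Proof.
  intros HdR Hy a b Hab. apply scaled_le; [exact dt_pos | exact eps_pos |].
  exact (smooth2_nonincreasing_snd Rf Y Rf_smooth HdR y Hy a b Hab).
Qed.

Lemma reaction_exponent_nonpos (y rhoM : R) :
  (forall y rho, 0 < y <= Y -> 0 <= rho -> Derive (fun t => Rf t rho) y < 0) ->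
  Rf 0 rhoM = 0 -> 0 <= rhoM -> 0 <= y <= Y -> dt * Rf y rhoM / eps <= 0.
Proof.
  intros HdY HR0 HrhoM Hy.
  replace 0 with (dt * Rf 0 rhoM / eps) by (rewrite HR0; field; lra).
  apply scaled_le; [exact dt_pos | exact eps_pos |].
  exact (smooth2_le_at_zero_fst Rf Y Rf_smooth HdY y rhoM Hy HrhoM).
Qed.

End ReactionExponent.

Theorem propositionA2
  (Y : R) (mx my : nat) (dt eps rhoM : R) (Rf : R -> R -> R)
  (j : nat) (Nstar : nat -> nat -> R) :
  0 < Y -> (1 <= mx)%nat -> (1 <= my)%nat -> 0 < dt -> 0 < eps -> 0 < rhoM ->
  smooth2 Rf ->
  (exists M, forall y rho, 0 <= y <= Y -> 0 <= rho -> Rabs (Rf y rho) <= M) ->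
  Rf Y 0 = 0 -> Rf 0 rhoM = 0 ->
  (forall y rho, 0 <= y <= Y -> 0 <= rho -> Derive (fun r => Rf y r) rho < 0) ->
  (forall y rho, 0 < y <= Y -> 0 <= rho -> Derive (fun t => Rf t rho) y < 0) ->
  (1 <= j <= mx)%nat ->
  (forall k, (1 <= k <= my)%nat -> 0 <= Nstar j k) ->
  let dy := Y / INR my in
  let yk := fun k : nat => (INR k - 1 / 2) * dy in
  (* N^{h+1}_{j-1/2,k-1/2} = exp((U^* + dt R(y_{k-1/2}, rho))/eps) *)
  let Nnext := fun (rho : R) (k : nat) => expU eps (Nstar j k) (dt * Rf (yk k) rho) in
  let F := fun rho : R => dy * sum_n_m (fun k => Nnext rho k) 1 my in
  exists rho : R,
    (* (i) unique nonnegative solution of the fixed-point equation *)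
    (0 <= rho /\ rho = F rho /\
     (forall rho', 0 <= rho' -> rho' = F rho' -> rho' = rho)) /\
    (* the resulting N^{h+1} are nonnegative and rho = dy * sum N^{h+1} *)
    (forall k, (1 <= k <= my)%nat -> 0 <= Nnext rho k) /\
    rho = dy * sum_n_m (fun k => Nnext rho k) 1 my /\
    (* (ii) *)
    (0 <= dy * sum_n_m (fun k => Nstar j k) 1 my <= rhoM -> 0 <= rho <= rhoM).
Proof.
  intros HY _ Hmy Hdt Heps HrhoM Hsmooth [M HM] _ HR0 HdR HdY _ HN dy yk Nnext F.
  assert (Hdy : 0 < dy) by (apply Rdiv_lt_0_compat; [lra | apply lt_0_INR; lia]).
  assert (Hyk : forall k, (1 <= k <= my)%nat -> 0 <= yk k <= Y).
  { intros k Hk. destruct (midpoint_in_domain Y my k HY Hk). unfold yk, dy. lra. }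
  set (e := fun k rho => dt * Rf (yk k) rho / eps).
  assert (HF : forall rho, F rho = weighted_exp_map dy (Nstar j) e my rho).
  { intros rho. unfold F, weighted_exp_map. f_equal.
    apply sum_n_m_ext_loc. intros k Hk. apply expU_eq; [lra | apply HN, Hk]. }
  assert (He_mono : forall k, (1 <= k <= my)%nat -> nonincreasing_on_nonneg (e k)).
  { intros k Hk. apply (reaction_exponent_nonincreasing Rf Y); auto. }
  destruct (weighted_exp_map_unique_fixed_point dy (Nstar j) e my Hdy HN (dt * M / eps))
    as [rho [Hrho [Hfix Huniq]]].
  - intros k rho. apply reaction_exponent_derivable; assumption.
  - exact He_mono.
  - intros k rho Hk Hrho. apply scaled_le; [exact Hdt | exact Heps |].
    apply Rabs_le_between, HM; [apply Hyk, Hk | exact Hrho].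
  - exists rho. rewrite HF.
    split; [split; [exact Hrho | split; [exact Hfix |]] | split; [| split]].
    + intros rho' Hrho' Hfix'. rewrite HF in Hfix'. exact (Huniq rho' Hrho' Hfix').
    + intros k Hk. unfold Nnext. rewrite expU_eq by (apply HN in Hk; lra).
      apply Rmult_le_pos; [apply HN, Hk | left; apply exp_pos].
    + change (rho = F rho). now rewrite HF.
    + (* (ii): the exponents are nonpositive at rhoM, so g(rhoM) <= rho* <= rhoM. *)
      intros [_ Hstar]. split; [exact Hrho |].
      apply (weighted_exp_map_fixed_point_le dy (Nstar j) e my); auto; [lra |].
      intros k Hk. apply (reaction_exponent_nonpos Rf Y); auto; lra.
Qed.
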